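(* For every bounded measurable $G:[0,a^*]\to[0,\infty[$ with $G\ge4\pi$ a.e. and every $\beta>0$, $\kappa_1(G,\beta)<\beta$.
   Context: $\kappa_1(G,\beta):=\inf_{f\in\mathcal F_G\setminus\{0\}}\frac{\int_0^{a^*}\left(aG(a)|f'(a)|^2+\frac{\beta^2a}{G(a)}|f(a)|^2\right)da}{\int_0^{a^*}|f(a)|^2da}$, where $\mathcal F_G$ is the set of $f\in L^2(]0,a^*[)$ whose distributional derivative satisfies $\int_0^{a^*}|f'|^2aG\,da<\infty$. *)

From HB Require Import structures.
From mathcomp Require Import all_boot all_order all_algebra.
From mathcomp Require Import all_classical all_reals all_analysis.
Set Implicit Arguments. Unset Strict Implicit. Unset Printing Implicit Defensive.
Import Order.TTheory GRing.Theory Num.Theory.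
Import numFieldNormedType.Exports.
Local Open Scope classical_set_scope.
Local Open Scope ring_scope.

Section Defs.
Variable R : realType.
Local Notation mu := (@lebesgue_measure R).

Definition oI (astar : R) : set R := `]0, astar[.

Definition test_fun (astar : R) (phi : R -> R) : Prop :=
  (forall (n : nat) (x : R), derivable (derive1n n phi) x 1) /\
  exists c d : R, 0 < c /\ c < d /\ d < astar /\
    (forall x : R, (x < c \/ d < x) -> phi x = 0).

Definition loc_integrable (astar : R) (g : R -> R) : Prop :=
  forall c d : R, 0 < c -> c < d -> d < astar ->
    mu.-integrable `[c, d] (fun x => (g x)%:E).

Definition distr_deriv (astar : R) (f g : R -> R) : Prop :=
  loc_integrable astar g /\
  forall phi : R -> R, test_fun astar phi ->
    (\int[mu]_(x in oI astar) (f x * derive1 phi x)%:E =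
     - \int[mu]_(x in oI astar) (g x * phi x)%:E)%E.

Definition L2 (astar : R) (f : R -> R) : Prop :=
  measurable_fun (oI astar) f /\
  (\int[mu]_(x in oI astar) ((f x) ^+ 2)%:E < +oo)%E.

Definition in_FG (astar : R) (G : R -> R) (f g : R -> R) : Prop :=
  L2 astar f /\ distr_deriv astar f g /\
  (\int[mu]_(x in oI astar) ((g x) ^+ 2 * x * G x)%:E < +oo)%E.

Definition nonzero_L2 (astar : R) (f : R -> R) : Prop :=
  ~ {ae mu, forall x : R, x \in oI astar -> f x = 0}.

Definition rayleigh (astar : R) (G : R -> R) (beta : R) (f g : R -> R) : \bar R :=
  ((\int[mu]_(x in oI astar)
      (x * G x * (g x) ^+ 2 + beta ^+ 2 * x / G x * (f x) ^+ 2)%:E) /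
   (\int[mu]_(x in oI astar) ((f x) ^+ 2)%:E))%E.

Definition kappa1 (astar : R) (G : R -> R) (beta : R) : \bar R :=
  ereal_inf [set r : \bar R | exists f g : R -> R,
     nonzero_L2 astar f /\ in_FG astar G f g /\ r = rayleigh astar G beta f g].
End Defs.

From HB Require Import structures.
From mathcomp Require Import all_boot all_order all_algebra.
From mathcomp Require Import all_classical all_reals all_analysis.
From mathcomp Require Import ring lra measurable_realfun.
Import Order.TTheory GRing.Theory Num.Theory.
Import numFieldNormedType.Exports.
Local Open Scope classical_set_scope.
Local Open Scope ring_scope.
Set Implicit Arguments. Unset Strict Implicit. Unset Printing Implicit Defensive.

(* Let h be 1 / G, cut off at 1 / m where m <= G a.e. (m = 4 pi), and let
   f x := expR (- beta * \int_0^x h).  Then f' = - beta h f and, since G h = 1 a.e.,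
   both terms of the Rayleigh numerator equal beta^2 x h f^2, so the numerator is
   2 beta^2 \int x h f^2.  Integrating f^2 by parts against x gives
   \int f^2 = astar f(astar)^2 + 2 beta \int x h f^2 > 2 beta \int x h f^2, hence the
   quotient of f is below beta.  As h is only bounded and measurable, the two calculus
   facts used (f' = - beta h f and integration by parts) are derived from the remark
   that a function whose increments are O((y - x)^2) is constant. *)

Section ExpR.
Variable R : realType.
Implicit Types u v : R.

Lemma expRN_le1 u : 0 <= u -> expR (- u) <= 1.
Proof. by move=> u0; rewrite expR_le1 oppr_le0. Qed.

Lemma expRN_sub u v : 0 <= u -> u <= v -> 0 <= expR (- u) - expR (- v) <= v - u.
Proof.
move=> u0 uv.
have -> : expR (- v) = expR (- u) * expR (- (v - u)).
  by rewrite -expRD; congr expR; ring.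
have eu1 := expRN_le1 u0; have eu0 := expR_ge0 (- u).
have ed1 : expR (- (v - u)) <= 1 by apply: expRN_le1; rewrite subr_ge0.
have ed := expR_ge1Dx (- (v - u)).
rewrite -{1}(mulr1 (expR (- u))) -mulrBr.
set d := expR (- (v - u)) in ed1 ed *; set e := expR (- u) in eu1 eu0 *.
apply/andP; split; first by rewrite mulr_ge0// subr_ge0.
nra.
Qed.

Lemma expRN_taylor u : 0 <= u -> 0 <= expR (- u) - 1 + u <= u ^+ 2.
Proof.
move=> u0; have := expR_ge1Dx (- u); have := expR_ge1Dx u.
have := expR_gt0 u; have : 0 <= u ^+ 3 by rewrite exprn_ge0.
move=> u3 eu0 eu1 eNu1; apply/andP; split; first lra.
have : expR (- u) <= (1 + u)^-1 by rewrite expRN lef_pV2 ?posrE//; lra.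
suff : (1 + u)^-1 <= 1 - u + u ^+ 2 by lra.
rewrite -div1r ler_pdivrMr; last lra.
have -> : (1 - u + u ^+ 2) * (1 + u) = 1 + u ^+ 3 by ring.
lra.
Qed.

End ExpR.

Section IntervalIntegral.
Variable R : realType.
Local Notation mu := (@lebesgue_measure R).
Implicit Types (k : R -> R) (a b c K : R).

Lemma lebesgue_measure_itvcc_lty a b : (mu `[a, b] < +oo)%E.
Proof. by rewrite lebesgue_measure_itv/=; case: ifP => _ //; exact: ltry. Qed.

Lemma fine_lebesgue_measure_itvcc a b : a <= b -> fine (mu `[a, b]) = b - a.
Proof.
move=> ab; rewrite lebesgue_measure_itv/= lte_fin.
have [_|ba] := ltP a b; first by [].
have -> : b = a by apply/le_anti; rewrite ba ab.
by rewrite subrr.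
Qed.

Lemma bounded_integrable_itvcc k a b K : measurable_fun setT k ->
  (forall x, a <= x -> x <= b -> `|k x| <= K) -> mu.-integrable `[a, b] (EFin \o k).
Proof.
move=> mk kK; apply: measurable_bounded_integrable => //.
- exact: lebesgue_measure_itvcc_lty.
- exact: measurable_funTS.
exists K; split; first by rewrite num_real.
move=> M KM x; rewrite /= in_itv/= => /andP[ax xb].
by rewrite (le_trans (kK _ ax xb))// ltW.
Qed.

Lemma Rintegral_itvcc_split k a c b K : measurable_fun setT k ->
  (forall x, a <= x -> x <= b -> `|k x| <= K) -> a <= c -> c <= b ->
  \int[mu]_(x in `[a, b]) k x =
  \int[mu]_(x in `[a, c]) k x + \int[mu]_(x in `[c, b]) k x.
Proof.
move=> mk kK ac cb; have ik := bounded_integrable_itvcc mk kK.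
have := @Rintegral_itvB R k (BLeft a) (BRight b) c ik.
rewrite !bnd_simp => /(_ ac cb) h.
rewrite -(@Rintegral_itv_obnd_cbnd R c (BRight b)); last first.
  by apply: integrableS ik => //; apply: subset_itvr; rewrite bnd_simp.
by rewrite -h addrC subrK.
Qed.

Lemma normr_Rintegral_itvcc_le k a b K : a <= b -> measurable_fun setT k ->
  (forall x, a <= x -> x <= b -> `|k x| <= K) ->
  `|\int[mu]_(x in `[a, b]) k x| <= K * (b - a).
Proof.
move=> ab mk kK.
apply: (le_trans (le_normr_Rintegral _ (bounded_integrable_itvcc mk kK))) => //.
rewrite -(fine_lebesgue_measure_itvcc ab) -(@Rintegral_cst _ _ _ mu `[a, b])//.
apply: le_Rintegral => //.
- apply: (@bounded_integrable_itvcc _ a b K); first exact: measurableT_comp.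
  by move=> x ax xb; rewrite normr_id; exact: kK.
- exact: (@bounded_integrable_itvcc _ a b `|K|).
- by move=> x; rewrite /= in_itv/= => /andP[ax xb]; exact: kK.
Qed.

Lemma integral_itvoo_Rintegral k a b K : measurable_fun setT k ->
  (forall x, a <= x -> x <= b -> `|k x| <= K) ->
  (\int[mu]_(x in `]a, b[) (k x)%:E)%E = (\int[mu]_(x in `[a, b]) k x)%:E.
Proof.
move=> mk kK; have ik := bounded_integrable_itvcc mk kK.
rewrite integral_itv_obnd_cbnd; last by apply/measurable_EFinP; exact: measurable_funTS.
rewrite integral_itv_bndo_bndc; last by apply/measurable_EFinP; exact: measurable_funTS.
by rewrite /Rintegral fineK// integrable_fin_num.
Qed.

(* Halving [[x, y]] n times improves the constant to [C / 2 ^+ n]. *)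
Lemma quadratic_increment_cst (D : R -> R) a b C :
  (forall x y, a <= x -> x <= y -> y <= b -> `|D y - D x| <= C * (y - x) ^+ 2) ->
  forall y, a <= y -> y <= b -> D y = D a.
Proof.
move=> hD.
have hn n x y : a <= x -> x <= y -> y <= b ->
    `|D y - D x| <= C / 2 ^+ n * (y - x) ^+ 2.
  elim: n x y => [|n IH] x y ax xy yb; first by rewrite expr0 divr1; exact: hD.
  set m := (x + y) / 2.
  have xm : x <= m by rewrite /m; lra.
  have my : m <= y by rewrite /m; lra.
  apply: (le_trans (y := `|D y - D m| + `|D m - D x|)).
    by rewrite (_ : D y - D x = (D y - D m) + (D m - D x)) ?ler_normD//; ring.
  apply: (le_trans (lerD (IH m y (le_trans ax xm) my yb)
                         (IH x m ax xm (le_trans my yb)))).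
  rewrite /m (exprS 2 n) le_eqVlt; apply/orP; left; apply/eqP.
  have : (2 : R) ^+ n != 0 by rewrite expf_neq0.
  by set t := (2 : R) ^+ n => t0; field.
move=> y ay yb; apply/eqP; rewrite -subr_eq0 -normr_eq0; apply/eqP.
apply/le_anti; rewrite normr_ge0 andbT leNgt; apply/negP => e0.
set e := `|D y - D a| in e0.
have K0 : 0 <= `|C| * (y - a) ^+ 2 / e.
  by apply: divr_ge0; [rewrite mulr_ge0 ?sqr_ge0|exact: ltW].
have := archi_boundP K0; set n := Num.bound _ => hb.
have : e <= `|C| * (y - a) ^+ 2 / 2 ^+ n.
  apply: (le_trans (hn n a y (lexx a) ay yb)); rewrite mulrAC.
  by rewrite ler_wpM2r ?invr_ge0 ?exprn_ge0// ler_wpM2r ?sqr_ge0 ?ler_norm.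
rewrite ler_pdivlMr ?exprn_gt0// -ler_pdivlMl// mulrC => h2.
have : (n%:R : R) < 2 ^+ n by rewrite -natrX ltr_nat ltn_expl.
by move=> h4; have := lt_trans (lt_le_trans h4 h2) hb; rewrite ltxx.
Qed.

End IntervalIntegral.

Section Primitive.
Variable R : realType.
Local Notation mu := (@lebesgue_measure R).

Definition primitive (h : R -> R) (y : R) : R := \int[mu]_(x in `[0, y]) h x.

Definition exp_primitive (h : R -> R) (c y : R) : R := expR (- (c * primitive h y)).

Variables (h : R -> R) (c0 : R).
Hypotheses (mh : measurable_fun setT h) (h_ge0 : forall x, 0 <= h x)
  (h_le : forall x, h x <= c0).
Local Notation H := (primitive h).
Implicit Types x y s t : R.

Let c0_ge0 : 0 <= c0. Proof. exact: le_trans (h_ge0 0) (h_le 0). Qed.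

Let normr_h x : `|h x| <= c0. Proof. by rewrite ger0_norm. Qed.

Lemma primitive0 : H 0 = 0.
Proof. by rewrite /primitive set_itv1 Rintegral_set1. Qed.

Let primitive_lt0 y : y < 0 -> H y = 0.
Proof.
by move=> y0; rewrite /primitive set_itv_ge ?Rintegral_set0// bnd_simp -ltNge.
Qed.

Lemma primitive_sub x y : 0 <= x -> x <= y -> H y - H x = \int[mu]_(s in `[x, y]) h s.
Proof.
move=> x0 xy; rewrite /primitive (@Rintegral_itvcc_split _ h 0 x y c0)//.
by rewrite addrC addKr.
Qed.

Lemma primitive_ge0 y : 0 <= H y.
Proof.
have [y0|y0] := ltP y 0; first by rewrite primitive_lt0.
exact: Rintegral_ge0.
Qed.

Lemma primitive_sub_bound x y : 0 <= x -> x <= y -> 0 <= H y - H x <= c0 * (y - x).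
Proof.
move=> x0 xy; rewrite primitive_sub// Rintegral_ge0//=.
by apply: le_trans (ler_norm _) _; exact: normr_Rintegral_itvcc_le.
Qed.

Lemma primitive_nondecreasing : nondecreasing_fun H.
Proof.
move=> x y xy; have [x0|x0] := ltP x 0; first by rewrite primitive_lt0// primitive_ge0.
by have /andP[+ _] := primitive_sub_bound x0 xy; rewrite subr_ge0.
Qed.

Lemma measurable_primitive : measurable_fun setT H.
Proof. exact: nondecreasing_measurable primitive_nondecreasing. Qed.

Variable c : R.
Hypothesis c_ge0 : 0 <= c.
Local Notation E := (exp_primitive h c).

Lemma exp_primitive_gt0_le1 s : 0 < E s <= 1.
Proof. by rewrite expR_gt0 expRN_le1// mulr_ge0// primitive_ge0. Qed.

Lemma normr_exp_primitive_le1 s : `|E s| <= 1.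
Proof. by have /andP[e0 e1] := exp_primitive_gt0_le1 s; rewrite gtr0_norm. Qed.

Lemma measurable_exp_primitive : measurable_fun setT E.
Proof.
apply: measurableT_comp; first exact: measurable_expR.
apply: measurableT_comp => //; apply: measurableT_comp => //.
exact: measurable_primitive.
Qed.

Lemma exp_primitive_lipschitz x y : 0 <= x -> x <= y -> `|E y - E x| <= c * c0 * (y - x).
Proof.
move=> x0 xy; have /andP[d0 d1] := primitive_sub_bound x0 xy.
have := @expRN_sub _ (c * H x) (c * H y).
rewrite mulr_ge0 ?primitive_ge0// ler_wpM2l ?primitive_nondecreasing//.
move=> /(_ isT isT) /andP[e0 e1].
rewrite distrC ger0_norm//; apply: (le_trans e1).
by rewrite -mulrBr -mulrA ler_wpM2l.
Qed.

Let measurable_Eh : measurable_fun setT (fun s => E s * h s).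
Proof. exact: measurable_funM measurable_exp_primitive mh. Qed.

Let normr_Eh s : `|E s * h s| <= c0.
Proof. by rewrite normrM -[c0]mul1r ler_pM ?normr_exp_primitive_le1. Qed.

(* Since [E t = E x * expR (- c (H t - H x))], the increment is a second-order
   Taylor remainder of [expR] plus [c \int_x^t (E s - E x) h s], and both are
   quadratic in [t - x]. *)
Lemma exp_primitive_increment x t : 0 <= x -> x <= t ->
  `|(E t + c * \int[mu]_(s in `[0, t]) (E s * h s)) -
    (E x + c * \int[mu]_(s in `[0, x]) (E s * h s))| <= 2 * c ^+ 2 * c0 ^+ 2 * (t - x) ^+ 2.
Proof.
move=> x0 xt; rewrite (@Rintegral_itvcc_split _ _ 0 x t c0)//.
set J := \int[mu]_(s in `[x, t]) (E s * h s).
have hJ : J = E x * (H t - H x) + \int[mu]_(s in `[x, t]) ((E s - E x) * h s).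
  have iEh := @bounded_integrable_itvcc _ _ x t _ measurable_Eh (fun s _ _ => normr_Eh s).
  have ih := @bounded_integrable_itvcc _ _ x t _ mh (fun s _ _ => normr_h s).
  have iEx : mu.-integrable `[x, t] (EFin \o (fun s => E x * h s)).
    apply: (@bounded_integrable_itvcc _ _ x t c0); first exact: measurable_funM.
    by move=> s _ _; rewrite normrM -[c0]mul1r ler_pM ?normr_exp_primitive_le1.
  under [in RHS]eq_Rintegral do rewrite mulrBl.
  by rewrite RintegralB// RintegralZl// (primitive_sub x0 xt) /J; ring.
have hEt : E t = E x * expR (- (c * (H t - H x))).
  by rewrite /exp_primitive -expRD; congr expR; ring.
have -> : E t + c * (\int[mu]_(s in `[0, x]) (E s * h s) + J) -
    (E x + c * \int[mu]_(s in `[0, x]) (E s * h s)) =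
    E x * (expR (- (c * (H t - H x))) - 1 + c * (H t - H x)) +
    c * \int[mu]_(s in `[x, t]) ((E s - E x) * h s).
  by rewrite hEt hJ; ring.
have /andP[d0 d1] := primitive_sub_bound x0 xt.
have /andP[q0 q1] := @expRN_taylor _ (c * (H t - H x)) (mulr_ge0 c_ge0 d0).
have taylor : `|E x * (expR (- (c * (H t - H x))) - 1 + c * (H t - H x))| <=
    (c * c0 * (t - x)) ^+ 2.
  rewrite normrM -[_ ^+ 2]mul1r ler_pM ?normr_exp_primitive_le1// ger0_norm//.
  apply: (le_trans q1); rewrite -mulrA lerXn2r ?nnegrE ?mulr_ge0 ?subr_ge0//.
    by rewrite -subr_ge0.
  by rewrite ler_wpM2l.
have oscillation : `|c * \int[mu]_(s in `[x, t]) ((E s - E x) * h s)| <=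
    c * ((c * c0 * (t - x) * c0) * (t - x)).
  rewrite normrM ger0_norm// ler_wpM2l// normr_Rintegral_itvcc_le//.
    apply: measurable_funM => //; apply: measurable_funB => //.
    exact: measurable_exp_primitive.
  move=> s xs st; rewrite normrM ler_pM//.
  apply: (le_trans (exp_primitive_lipschitz x0 xs)).
  by rewrite ler_wpM2l ?mulr_ge0// lerD2r.
apply: (le_trans (ler_normD _ _)); apply: (le_trans (lerD taylor oscillation)).
by rewrite le_eqVlt; apply/orP; left; apply/eqP; ring.
Qed.

Lemma exp_primitive_eq y : 0 <= y -> E y = 1 - c * \int[mu]_(s in `[0, y]) (E s * h s).
Proof.
move=> y0; pose D t := E t + c * \int[mu]_(s in `[0, t]) (E s * h s).
have E0 : E 0 = 1 by rewrite /exp_primitive primitive0 mulr0 oppr0 expR0.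
have : D y = D 0.
  apply: (@quadratic_increment_cst _ D 0 y (2 * c ^+ 2 * c0 ^+ 2)) => // x t x0 xt _.
  exact: exp_primitive_increment.
rewrite /D set_itv1 Rintegral_set1 mulr0 addr0 E0 => <-; ring.
Qed.

Lemma exp_primitive_sub x y : 0 <= x -> x <= y ->
  E y - E x = \int[mu]_(s in `[x, y]) (- c * (E s * h s)).
Proof.
move=> x0 xy; rewrite exp_primitive_eq ?(le_trans x0)// exp_primitive_eq//.
have bEh s : 0 <= s -> s <= y -> `|E s * h s| <= c0 by move=> _ _; exact: normr_Eh.
rewrite (Rintegral_itvcc_split (c := x) measurable_Eh bEh)// RintegralZl//; first ring.
exact: bounded_integrable_itvcc measurable_Eh (fun s _ _ => normr_Eh s).
Qed.

End Primitive.

Section IntegrationByParts.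
Variable R : realType.
Local Notation mu := (@lebesgue_measure R).
Implicit Types x y s t : R.
Variables (F k p dp : R -> R) (a b KF Kk Kp Kdp : R).
Hypotheses (mF : measurable_fun setT F) (mk : measurable_fun setT k)
  (mp : measurable_fun setT p) (mdp : measurable_fun setT dp)
  (Fk : forall x y, a <= x -> x <= y -> y <= b -> F y - F x = \int[mu]_(s in `[x, y]) k s)
  (pdp : forall x y, a <= x -> x <= y -> y <= b -> p y - p x = \int[mu]_(s in `[x, y]) dp s)
  (bF : forall x, a <= x -> x <= b -> `|F x| <= KF)
  (bk : forall x, a <= x -> x <= b -> `|k x| <= Kk)
  (bp : forall x, a <= x -> x <= b -> `|p x| <= Kp)
  (bdp : forall x, a <= x -> x <= b -> `|dp x| <= Kdp).

Let boundM (f g : R -> R) Kf Kg : (forall x, a <= x -> x <= b -> `|f x| <= Kf) ->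
  (forall x, a <= x -> x <= b -> `|g x| <= Kg) ->
  forall x, a <= x -> x <= b -> `|f x * g x| <= Kf * Kg.
Proof. by move=> hf hg x ax xb; rewrite normrM ler_pM ?hf ?hg. Qed.

Let boundW (f : R -> R) K x t : (forall x, a <= x -> x <= b -> `|f x| <= K) ->
  a <= x -> t <= b -> forall s, x <= s -> s <= t -> `|f s| <= K.
Proof. by move=> hf ax tb s xs st; apply: hf; [exact: le_trans xs|exact: le_trans tb]. Qed.

Let D t := \int[mu]_(s in `[a, t]) (F s * dp s) - F t * p t +
  \int[mu]_(s in `[a, t]) (k s * p s).

Let D_increment x t : a <= x -> x <= t -> t <= b ->
  D t - D x = \int[mu]_(s in `[x, t]) ((F s - F t) * dp s) +
              \int[mu]_(s in `[x, t]) (k s * (p s - p x)).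
Proof.
move=> ax xt tb; have xb := le_trans xt tb.
rewrite /D (Rintegral_itvcc_split (c := x) (measurable_funM mF mdp)
  (boundW (boundM bF bdp) (lexx a) tb))//.
rewrite (Rintegral_itvcc_split (c := x) (measurable_funM mk mp)
  (boundW (boundM bk bp) (lexx a) tb))//.
have iFtdp : mu.-integrable `[x, t] (EFin \o (fun s => F t * dp s)).
  apply: (bounded_integrable_itvcc (K := KF * Kdp)); first exact: measurable_funM.
  by move=> s xs st; rewrite normrM ler_pM ?bF ?(le_trans ax xt) ?(boundW bdp ax tb).
have ikpx : mu.-integrable `[x, t] (EFin \o (fun s => k s * p x)).
  apply: (bounded_integrable_itvcc (K := Kk * Kp)); first exact: measurable_funM.
  by move=> s xs st; rewrite normrM ler_pM ?bp ?(boundW bk ax tb).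
have iFdp := bounded_integrable_itvcc (measurable_funM mF mdp) (boundW (boundM bF bdp) ax tb).
have ikp := bounded_integrable_itvcc (measurable_funM mk mp) (boundW (boundM bk bp) ax tb).
have e1 : \int[mu]_(s in `[x, t]) ((F s - F t) * dp s) =
    \int[mu]_(s in `[x, t]) (F s * dp s) - F t * (p t - p x).
  have -> : \int[mu]_(s in `[x, t]) ((F s - F t) * dp s) =
      \int[mu]_(s in `[x, t]) (F s * dp s - F t * dp s).
    by apply: eq_Rintegral => s _; ring.
  rewrite RintegralB// RintegralZl ?pdp//.
  exact: bounded_integrable_itvcc mdp (boundW bdp ax tb).
have e2 : \int[mu]_(s in `[x, t]) (k s * (p s - p x)) =
    \int[mu]_(s in `[x, t]) (k s * p s) - (F t - F x) * p x.
  have -> : \int[mu]_(s in `[x, t]) (k s * (p s - p x)) =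
      \int[mu]_(s in `[x, t]) (k s * p s - k s * p x).
    by apply: eq_Rintegral => s _; ring.
  rewrite RintegralB// RintegralZr ?Fk//.
  exact: bounded_integrable_itvcc mk (boundW bk ax tb).
by rewrite e1 e2; ring.
Qed.

Lemma Rintegration_by_parts_bounded : a <= b ->
  \int[mu]_(s in `[a, b]) (F s * dp s) =
  F b * p b - F a * p a - \int[mu]_(s in `[a, b]) (k s * p s).
Proof.
move=> ab.
have : D b = D a.
  apply: (@quadratic_increment_cst _ D a b (2 * Kk * Kdp)) => // x t ax xt tb.
  rewrite D_increment//; apply: (le_trans (ler_normD _ _)).
  have h1 : `|\int[mu]_(s in `[x, t]) ((F s - F t) * dp s)| <= Kk * (t - x) * Kdp * (t - x).
    apply: normr_Rintegral_itvcc_le => //.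
      by apply: measurable_funM => //; apply: measurable_funB.
    move=> s xs st; rewrite normrM ler_pM ?(boundW bdp ax tb)//.
    rewrite distrC Fk ?(le_trans ax xs)//.
    apply: (le_trans (normr_Rintegral_itvcc_le st mk (boundW bk (le_trans ax xs) tb))).
    by rewrite ler_wpM2l ?(le_trans _ (bk ax (le_trans xt tb))) ?lerD2l ?lerN2.
  have h2 : `|\int[mu]_(s in `[x, t]) (k s * (p s - p x))| <= Kk * (Kdp * (t - x)) * (t - x).
    apply: normr_Rintegral_itvcc_le => //.
      by apply: measurable_funM => //; apply: measurable_funB.
    move=> s xs st; rewrite normrM ler_pM ?(boundW bk ax tb)//.
    rewrite pdp ?(le_trans st tb)//.
    apply: (le_trans (normr_Rintegral_itvcc_le xs mdp (boundW bdp ax (le_trans st tb)))).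
    by rewrite ler_wpM2l ?(le_trans _ (bdp ax (le_trans xt tb))) ?lerD2r.
  apply: (le_trans (lerD h1 h2)).
  by rewrite le_eqVlt; apply/orP; left; apply/eqP; ring.
rewrite /D !set_itv1 !Rintegral_set1 => hD; lra.
Qed.

End IntegrationByParts.

Section TestFunctions.
Variable R : realType.
Local Notation mu := (@lebesgue_measure R).
Implicit Types (g phi : R -> R) (a b x y : R).

Lemma derivable_continuous g : (forall x, derivable g x 1) -> continuous g.
Proof.
by move=> dg x; apply: differentiable_continuous; rewrite -derivable1_diffP.
Qed.

Lemma continuous_bounded_itvcc g a b : continuous g ->
  exists K, forall x, a <= x -> x <= b -> `|g x| <= K.
Proof.
move=> cg; have [ab|ba] := leP a b; last first.
  by exists 0 => x ax xb; have := le_lt_trans (le_trans ax xb) ba; rewrite ltxx.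
have cn : {within `[a, b], continuous (fun x => `|g x|)}.
  apply: continuous_subspaceT => x.
  exact: (continuous_comp (cg x) (@norm_continuous _ R^o (g x))).
have [c _ hc] := EVT_max ab cn.
by exists `|g c| => x ax xb; apply: hc; rewrite in_itv/= ax xb.
Qed.

Lemma continuous_FTC2_Rintegral phi x y : (forall z, derivable phi z 1) ->
  continuous (derive1 phi) -> x <= y ->
  phi y - phi x = \int[mu]_(s in `[x, y]) derive1 phi s.
Proof.
move=> dphi cphi'; rewrite le_eqVlt => /predU1P[<-|xy].
  by rewrite subrr set_itv1 Rintegral_set1.
have cphi := derivable_continuous dphi.
rewrite /Rintegral (@continuous_FTC2 _ _ phi)//.
- exact: continuous_subspaceT.
- split; [by move=> z _; exact: dphi|exact/cvg_at_right_filter/cphi|].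
  exact/cvg_at_left_filter/cphi.
Qed.

Lemma test_fun_derivable astar phi : test_fun astar phi -> forall x, derivable phi x 1.
Proof. by move=> [dphi _] x; have := dphi 0%N x; rewrite derive1n0. Qed.

Lemma test_fun_continuous_derive1 astar phi : test_fun astar phi ->
  continuous (derive1 phi).
Proof.
move=> [dphi _]; apply: derivable_continuous => x.
by have := dphi 1%N x; rewrite derive1n1.
Qed.

Lemma test_fun_eq0 astar phi : test_fun astar phi -> phi 0 = 0 /\ phi astar = 0.
Proof. by move=> [_ [c [d [c0 [_ [dA supp]]]]]]; split; apply: supp; [left|right]. Qed.

Lemma distr_deriv_primitive astar (F k : R -> R) KF Kk : 0 <= astar ->
  measurable_fun setT F -> measurable_fun setT k ->
  (forall x y, 0 <= x -> x <= y -> y <= astar ->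
     F y - F x = \int[mu]_(s in `[x, y]) k s) ->
  (forall x, 0 <= x -> x <= astar -> `|F x| <= KF) ->
  (forall x, 0 <= x -> x <= astar -> `|k x| <= Kk) ->
  distr_deriv astar F k.
Proof.
move=> A0 mF mk Fk bF bk; split.
  move=> c d c0 cd dA; apply: (bounded_integrable_itvcc (K := Kk)) => // x cx xd.
  by apply: bk; [exact: le_trans (ltW c0) cx|exact: le_trans (ltW dA)].
move=> phi tphi; have dphi := test_fun_derivable tphi.
have cphi' := test_fun_continuous_derive1 tphi.
have cphi := derivable_continuous dphi.
have [phi0 phiA] := test_fun_eq0 tphi.
have [Kdp bdp] := continuous_bounded_itvcc 0 astar cphi'.
have [Kp bp] := continuous_bounded_itvcc 0 astar cphi.
have mp := continuous_measurable_fun cphi.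
have mdp := continuous_measurable_fun cphi'.
rewrite /oI (@integral_itvoo_Rintegral _ _ 0 astar (KF * Kdp)); last 2 first.
- exact: measurable_funM.
- by move=> x x0 xA; rewrite normrM ler_pM ?bF ?bdp.
rewrite (@integral_itvoo_Rintegral _ _ 0 astar (Kk * Kp)); last 2 first.
- exact: measurable_funM.
- by move=> x x0 xA; rewrite normrM ler_pM ?bk ?bp.
rewrite -EFinN; congr EFin.
rewrite (Rintegration_by_parts_bounded mF mk mp mdp Fk _ bF bk bp bdp A0) ?phi0 ?phiA.
  by rewrite !mulr0 !subr0 sub0r.
by move=> x y _ xy _; exact: continuous_FTC2_Rintegral.
Qed.

End TestFunctions.

Lemma measurable_inv (R : realType) : measurable_fun setT (@GRing.inv R).
Proof.
have -> : [set: R] = (`]-oo, 0[ `|` `]0, +oo[) `|` [set 0].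
  apply/seteqP; split => x //= _.
  by have [x0|x0|->] := ltgtP x 0; [left; left|left; right|right];
    rewrite /= ?in_itv/= ?x0.
apply/(measurable_funU _ (measurableU _ _ (measurable_itv _) (measurable_itv _))
  (measurable_set1 _)).
split; last exact: measurable_fun_set1.
apply/(measurable_funU _ (measurable_itv _) (measurable_itv _)).
split; apply: open_continuous_measurable_fun; try exact: interval_open.
- by move=> x; rewrite inE/= in_itv/= => x0; apply: inv_continuous; rewrite lt_eqF.
- by move=> x; rewrite inE/= in_itv/= andbT => x0; apply: inv_continuous; rewrite gt_eqF.
Qed.

Section RayleighBelowBeta.
Variable R : realType.
Local Notation mu := (@lebesgue_measure R).
Variables (astar m M beta : R) (G : R -> R).
Hypotheses (astar_gt0 : 0 < astar) (m_gt0 : 0 < m) (beta_gt0 : 0 < beta)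
  (mG : measurable_fun `[0, astar] G)
  (G_bounded : forall x, x \in `[0, astar] -> 0 <= G x <= M)
  (G_ge : {ae mu, forall x, x \in `[0, astar] -> m <= G x}).

Let h := (fun x => (Num.max (G x) m)^-1) \_ `[0, astar].
Let f := exp_primitive h beta.
Let g x := - beta * (f x * h x).
Let u := exp_primitive h (2 * beta).

Let beta_ge0 : 0 <= beta. Proof. exact: ltW. Qed.
Let beta2_ge0 : 0 <= 2 * beta. Proof. by rewrite mulr_ge0. Qed.
Let max_gt0 x : 0 < Num.max (G x) m. Proof. by rewrite lt_max m_gt0 orbT. Qed.

Let h_ge0 x : 0 <= h x.
Proof. by rewrite /h patchE; case: ifP => // _; rewrite invr_ge0 ltW. Qed.

Let h_le x : h x <= m^-1.
Proof.
rewrite /h patchE; case: ifP => _; last by rewrite invr_ge0 ltW.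
by rewrite lef_pV2 ?posrE// le_max lexx orbT.
Qed.

Let normr_h x : `|h x| <= m^-1. Proof. by rewrite ger0_norm. Qed.

Let measurable_h : measurable_fun setT h.
Proof.
have mi : measurable_fun setT (fun t : R => (Num.max t m)^-1).
  apply: nonincreasing_measurable => // x y xy.
  by rewrite lef_pV2 ?posrE ?lt_max ?m_gt0 ?orbT// ge_max !le_max xy lexx !orbT.
by apply/(measurable_restrictT _ (measurable_itv _)); exact: measurableT_comp mi mG.
Qed.

Let h_eq_inv x : x \in `[0, astar] -> m <= G x -> h x = (G x)^-1.
Proof. by move=> x0A mG_x; rewrite /h patchE mem_set// max_l. Qed.

Let f_sqr x : f x ^+ 2 = u x.
Proof. by rewrite /f /u /exp_primitive expr2 -expRD; congr expR; ring. Qed.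

Let measurable_f : measurable_fun setT f. Proof. exact: measurable_exp_primitive. Qed.
Let measurable_u : measurable_fun setT u. Proof. exact: measurable_exp_primitive. Qed.

Let measurable_g : measurable_fun setT g.
Proof. by apply: measurable_funM => //; exact: measurable_funM. Qed.

Let normr_f x : `|f x| <= 1. Proof. exact: normr_exp_primitive_le1. Qed.
Let normr_u x : `|u x| <= 1. Proof. exact: normr_exp_primitive_le1. Qed.

Let normr_g x : `|g x| <= beta * m^-1.
Proof.
rewrite /g normrM normrN (gtr0_norm beta_gt0) ler_wpM2l// normrM -[m^-1]mul1r.
exact: ler_pM.
Qed.

Let oI_subset : oI astar `<=` `[0, astar].
Proof. by move=> x; rewrite /oI /= !in_itv/= => /andP[x0 xA]; rewrite !ltW. Qed.

Lemma nonzero_L2_exp_primitive : nonzero_L2 astar f.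
Proof.
move=> f0; have : mu.-negligible (oI astar).
  apply: negligibleS f0 => x /= xo fx.
  by have := exp_primitive_gt0_le1 h_ge0 beta_ge0 x; rewrite -/f (fx (mem_set xo)) ltxx.
move=> /(negligibleP mu (measurable_itv `]0, astar[)).1.
rewrite /= lebesgue_measure_itv/= lte_fin astar_gt0 /= => /eqP.
by rewrite oppr0 adde0 eqe gt_eqF.
Qed.

Lemma in_FG_exp_primitive : in_FG astar G f g.
Proof.
split; [split|split].
- exact: measurable_funTS.
- rewrite /oI (@integral_itvoo_Rintegral _ _ 0 astar 1) ?ltry//.
    exact: measurable_funX.
  by move=> x _ _; rewrite f_sqr.
- apply: (@distr_deriv_primitive _ _ _ _ 1 (beta * m^-1) (ltW astar_gt0)
    measurable_f measurable_g).
  + by move=> x y x0 xy _; exact: exp_primitive_sub.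
  + by move=> x _ _; exact: normr_f.
  + by move=> x _ _; exact: normr_g.
have gxG : mu.-integrable (oI astar) (fun x => ((g x) ^+ 2 * x * G x)%:E).
  apply: (@measurable_bounded_integrable _ _ _ mu (fun x => g x ^+ 2 * x * G x) (oI astar)
    (measurable_itv _)).
  - by rewrite /mu /= lebesgue_measure_itv/=; case: ifP => _ //; exact: ltry.
  - apply: measurable_funM; last exact: measurable_funS mG.
    apply: measurable_funM; first exact: measurable_funTS (measurable_funX _ measurable_g).
    exact: measurable_funTS.
  exists ((beta * m^-1) ^+ 2 * astar * M); split; first by rewrite num_real.
  move=> K KK x xo; have /andP[G0 GM] := G_bounded (oI_subset xo).
  move: xo; rewrite /oI /= in_itv/= => /andP[x0 xA].
  apply/ltW/(le_lt_trans _ KK).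
  rewrite normrM normrM normrX (gtr0_norm x0) (ger0_norm G0).
  apply: ler_pM => //; first exact: mulr_ge0 (exprn_ge0 _ (normr_ge0 _)) (ltW x0).
  apply: ler_pM; [exact: exprn_ge0|exact: ltW x0| |exact: ltW xA].
  by rewrite lerXn2r ?nnegrE ?normr_g// divr_ge0// ltW.
by have /(_ (measurable_itv _))/fin_numPlt/andP[] := integrable_fin_num _ gxG.
Qed.

Let Iu := \int[mu]_(s in `[0, astar]) u s.
Let Iw := \int[mu]_(s in `[0, astar]) (u s * h s * s).

Let measurable_uhx : measurable_fun setT (fun s => u s * h s * s).
Proof. by apply: measurable_funM => //; exact: measurable_funM. Qed.

Let normr_uhx x : 0 <= x -> x <= astar -> `|u x * h x * x| <= 1 * m^-1 * astar.
Proof. by move=> x0 xA; rewrite !normrM (ger0_norm x0) !ler_pM. Qed.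

Lemma integral_sqr_exp_primitive :
  (\int[mu]_(x in oI astar) ((f x) ^+ 2)%:E)%E = Iu%:E.
Proof.
under eq_integral do rewrite f_sqr.
by rewrite (@integral_itvoo_Rintegral _ u 0 astar 1).
Qed.

(* [G h = 1] a.e., so both terms of the numerator equal [beta ^+ 2 * x * h x * u x]. *)
Lemma rayleigh_numerator_exp_primitive :
  (\int[mu]_(x in oI astar)
     (x * G x * (g x) ^+ 2 + beta ^+ 2 * x / G x * (f x) ^+ 2)%:E)%E =
  ((2 * beta ^+ 2) * Iw)%:E.
Proof.
rewrite (@ae_eq_integral _ _ _ mu (oI astar)
  (fun x => ((2 * beta ^+ 2) * (u x * h x * x))%:E)); first last.
- apply: (negligibleS _ G_ge) => x /= neq Gx; apply: neq => xo.
  have x0A := oI_subset xo; have G_gt0 := lt_le_trans m_gt0 (Gx x0A).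
  rewrite /g (h_eq_inv x0A (Gx x0A)) -f_sqr; congr EFin; field.
  by rewrite gt_eqF.
- by apply/measurable_EFinP; apply: measurable_funTS; exact: measurable_funM.
- apply/measurable_EFinP; apply: measurable_funD.
    apply: measurable_funM; last exact: measurable_funTS (measurable_funX _ measurable_g).
    by apply: measurable_funM; [exact: measurable_funTS|exact: measurable_funS mG].
  apply: measurable_funM; last exact: measurable_funTS (measurable_funX _ measurable_f).
  apply: measurable_funM; first by apply: measurable_funM => //; exact: measurable_funTS.
  exact: measurableT_comp (@measurable_inv R) (measurable_funS _ oI_subset mG).
- exact: measurable_itv.
rewrite (@integral_itvoo_Rintegral _ _ 0 astar ((2 * beta ^+ 2) * (1 * m^-1 * astar))).
- by rewrite RintegralZl//; exact: bounded_integrable_itvcc measurable_uhx normr_uhx.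
- exact: measurable_funM.
- by move=> x x0 xA; rewrite normrM ger0_norm ?ler_pM ?normr_uhx ?mulr_ge0 ?exprn_ge0.
Qed.

(* Integration by parts of [u = f ^+ 2] against [x], using [u' = - 2 beta h u]. *)
Lemma integral_sqr_exp_primitive_by_parts : Iu = astar * u astar + 2 * beta * Iw.
Proof.
have u_sub x y : 0 <= x -> x <= y -> y <= astar ->
    u y - u x = \int[mu]_(s in `[x, y]) (- (2 * beta) * (u s * h s)).
  by move=> x0 xy _; exact: exp_primitive_sub.
have id_sub x y : 0 <= x -> x <= y -> y <= astar ->
    id y - id x = \int[mu]_(s in `[x, y]) (fun _ : R => 1) s.
  by move=> x0 xy _; rewrite Rintegral_cst// mul1r fine_lebesgue_measure_itvcc.
have bk x : 0 <= x -> x <= astar -> `|- (2 * beta) * (u x * h x)| <= 2 * beta * m^-1.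
  move=> _ _; rewrite normrM normrN (ger0_norm beta2_ge0).
  by apply: ler_pM => //; rewrite normrM -[m^-1]mul1r; exact: ler_pM.
have bid x : 0 <= x -> x <= astar -> `|id x| <= astar by move=> x0 xA; rewrite ger0_norm.
have b1 (x : R) : 0 <= x -> x <= astar -> `|1 : R| <= 1 by rewrite normr1.
have := @Rintegration_by_parts_bounded _ u _ id (fun _ => 1) 0 astar 1 _ astar 1
  measurable_u (measurable_funM (measurable_cst _) (measurable_funM measurable_u measurable_h))
  (@measurable_id _ _ setT) (measurable_cst _) u_sub id_sub (fun x _ _ => normr_u x) bk bid
  b1 (ltW astar_gt0).
under eq_Rintegral do rewrite mulr1.
rewrite -/Iu mulr0 subr0 => ->.
have -> : \int[mu]_(s in `[0, astar]) (- (2 * beta) * (u s * h s) * id s) =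
    - (2 * beta) * Iw.
  rewrite -RintegralZl//; last exact: bounded_integrable_itvcc measurable_uhx normr_uhx.
  by apply: eq_Rintegral => x _ /=; ring.
ring.
Qed.

Lemma rayleigh_exp_primitive_lt : (rayleigh astar G beta f g < beta%:E)%E.
Proof.
have Iw_ge0 : 0 <= Iw.
  apply: Rintegral_ge0 => x; rewrite /= in_itv/= => /andP[x0 _].
  have /andP[u0 _] := exp_primitive_gt0_le1 h_ge0 beta2_ge0 x.
  by rewrite !mulr_ge0// ltW.
have uA : 0 < u astar by have /andP[] := exp_primitive_gt0_le1 h_ge0 beta2_ge0 astar.
have Iu_gt0 : 0 < Iu.
  rewrite integral_sqr_exp_primitive_by_parts.
  by rewrite (lt_le_trans (mulr_gt0 astar_gt0 uA))// lerDl mulr_ge0.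
rewrite /rayleigh rayleigh_numerator_exp_primitive integral_sqr_exp_primitive.
rewrite inver (gt_eqF Iu_gt0) lte_pdivrMr// -EFinM lte_fin.
rewrite integral_sqr_exp_primitive_by_parts mulrDr.
have -> : beta * (2 * beta * Iw) = 2 * beta ^+ 2 * Iw by ring.
by rewrite ltrDr mulr_gt0// mulr_gt0.
Qed.

Lemma kappa1_lt_beta : (kappa1 astar G beta < beta%:E)%E.
Proof.
apply: le_lt_trans rayleigh_exp_primitive_lt; apply: ge_ereal_inf.
exists (rayleigh astar G beta f g) => //; exists f, g.
by split; [exact: nonzero_L2_exp_primitive|split; [exact: in_FG_exp_primitive|]].
Qed.

End RayleighBelowBeta.

Theorem mainTheorem15 (R : realType) (astar : R) (G : R -> R) (beta : R) :
  0 < astar ->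
  measurable_fun `[0, astar] G ->
  (exists M : R, forall x : R, x \in `[0, astar] -> 0 <= G x <= M) ->
  {ae (@lebesgue_measure R), forall x : R, x \in `[0, astar] -> 4 * pi <= G x} ->
  0 < beta ->
  (kappa1 astar G beta < beta%:E)%E.
Proof.
move=> astar_gt0 mG [M G_bounded] G_ge beta_gt0.
apply: (@kappa1_lt_beta R astar (4 * pi) M) => //.
by rewrite mulr_gt0// pi_gt0.
Qed.
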